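(* Let $m\ge 7$ and $n\ge 1$ be integers, and let $f$ be an extendable knight's tour on $\mathcal{M}_{m-4,n}$ based at $(0,0)$. If $f$ is nullhomotopic, then for every integer $k\ge 0$ there exists a nullhomotopic knight's tour on $\mathcal{M}_{m+4k,n}$. If $f$ is generating, then for every integer $k\ge 0$ there exists a generating knight's tour on $\mathcal{M}_{m+4k,n}$.
   Context: For a positive integer $k$, let $\mathcal{S}_k$ be the graph with vertex set $\{(a,b)\in\mathbb{Z}^2: 0\le a<k\}$, where $(a,b),(a',b')$ are adjacent iff $\{|a-a'|,|b-b'|\}=\{1,2\}$. For $n\ge1$, $\sigma_k(a,b)=(k-1-a,\,b+n)$ generates a free $\mathbb{Z}$-action on $\mathcal{S}_k$, and $\mathcal{M}_{k,n}=\mathcal{S}_k/\langle\sigma_k\rangle$ (vertices and edges are orbits; multiple edges/loops allowed) is the knight's multigraph of the $k\times n$ Möbius strip board, with covering map $\phi_M:\mathcal{S}_k\to\mathcal{M}_{k,n}$. A knight's tour is a closed walk visiting every vertex exactly once apart from the repeated start/end vertex (a Hamiltonian cycle). For a tour based at $(0,0)$, take its unique lift to $\mathcal{S}_k$ starting at $(0,0)$; the tour is nullhomotopic if the lift ends at $(0,0)$ and generating if it ends at $(k-1,n)$ or $(k-1,-n)$. Let $\iota:\mathcal{S}_{m-4}\to\mathcal{S}_m$, $\iota(a,b)=(a+2,b)$. A left edge of $\mathcal{S}_m$ joins a vertex with first coordinate $2$ to one with first coordinate $3$; a right edge joins a vertex with first coordinate $m-4$ to one with first coordinate $m-3$; the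 second coordinates of the endpoints differ by $2$, and the edge is even or odd according to their parity. A collection of left and right edges is extending if: for $n$ even, it consists of exactly four edges, two even and two odd; for $n$ odd, it consists of exactly two edges, one left even or right odd and the other left odd or right even. An edge is traversed upward by a walk if the second coordinate increases along the traversal, downward otherwise. A knight's tour $f$ on $\mathcal{M}_{m-4,n}$ based at $(0,0)$ with lift $\tilde f$ to $\mathcal{S}_{m-4}$ starting at $(0,0)$ is extendable if $\iota\circ\tilde f$ traverses every edge of some extending collection of edges of $\mathcal{S}_m$, exactly half of them upward and half downward. *)

From Stdlib Require Import ZArith List Permutation.
Import ListNotations.
Open Scope Z_scope.

Definition pt := (Z * Z)%type.

Definition knight_adj (p q : pt) : Prop :=
  (Z.abs (fst p - fst q) = 1 /\ Z.abs (snd p - snd q) = 2) \/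
  (Z.abs (fst p - fst q) = 2 /\ Z.abs (snd p - snd q) = 1).

Definition in_strip (k : Z) (p : pt) : Prop := 0 <= fst p < k.

Definition sigma (k n : Z) (p : pt) : pt := (k - 1 - fst p, snd p + n).

(* p and q lie in the same <sigma_k>-orbit, i.e. define the same vertex of M_{k,n} *)
Definition same_orbit (k n : Z) (p q : pt) : Prop :=
  exists j : nat, Nat.iter j (sigma k n) p = q \/ Nat.iter j (sigma k n) q = p.

(* A knight's tour of M_{k,n} based at (0,0), given by its unique lift w to S_k
   starting at (0,0): w 0, ..., w N is a walk in S_k whose projection
   phi_M(w 0), ..., phi_M(w N) is a closed walk in M_{k,n} visiting every
   vertex exactly once (apart from the repeated start/end vertex). *)
Definition tour_lift (k n : Z) (N : nat) (w : nat -> pt) : Prop :=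
  w 0%nat = (0, 0) /\
  (forall i, (i <= N)%nat -> in_strip k (w i)) /\
  (forall i, (i < N)%nat -> knight_adj (w i) (w (S i))) /\
  same_orbit k n (w N) (w 0%nat) /\
  (forall i j, (i < N)%nat -> (j < N)%nat -> same_orbit k n (w i) (w j) -> i = j) /\
  (forall p, in_strip k p -> exists i, (i < N)%nat /\ same_orbit k n p (w i)).

Definition nullhomotopic (N : nat) (w : nat -> pt) : Prop := w N = (0, 0).

Definition generating (k n : Z) (N : nat) (w : nat -> pt) : Prop :=
  w N = (k - 1, n) \/ w N = (k - 1, - n).

Definition iota (p : pt) : pt := (fst p + 2, snd p).

(* An edge of S_m between adjacent columns, recorded as (p,q) with
   fst q = fst p + 1 (p is the endpoint in the lower column). *)
Definition edge := (pt * pt)%type.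

Definition left_edge (m : Z) (e : edge) : Prop :=
  fst (fst e) = 2 /\ fst (snd e) = 3 /\ Z.abs (snd (fst e) - snd (snd e)) = 2.

Definition right_edge (m : Z) (e : edge) : Prop :=
  fst (fst e) = m - 4 /\ fst (snd e) = m - 3 /\ Z.abs (snd (fst e) - snd (snd e)) = 2.

Definition even_edge (e : edge) : Prop := Z.Even (snd (fst e)).
Definition odd_edge (e : edge) : Prop := Z.Odd (snd (fst e)).

Definition extending (m n : Z) (E : list edge) : Prop :=
  NoDup E /\
  (forall e, In e E -> left_edge m e \/ right_edge m e) /\
  ((Z.Even n /\
      exists e1 e2 e3 e4, Permutation E [e1; e2; e3; e4] /\
        even_edge e1 /\ even_edge e2 /\ odd_edge e3 /\ odd_edge e4) \/
   (Z.Odd n /\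
      exists e1 e2, Permutation E [e1; e2] /\
        ((left_edge m e1 /\ even_edge e1) \/ (right_edge m e1 /\ odd_edge e1)) /\
        ((left_edge m e2 /\ odd_edge e2) \/ (right_edge m e2 /\ even_edge e2)))).

Definition traverses_up (W : nat -> pt) (N : nat) (e : edge) : Prop :=
  exists i, (i < N)%nat /\
    ((W i = fst e /\ W (S i) = snd e) \/ (W i = snd e /\ W (S i) = fst e)) /\
    snd (W i) < snd (W (S i)).

Definition traverses_down (W : nat -> pt) (N : nat) (e : edge) : Prop :=
  exists i, (i < N)%nat /\
    ((W i = fst e /\ W (S i) = snd e) \/ (W i = snd e /\ W (S i) = fst e)) /\
    snd (W (S i)) < snd (W i).

Definition extendable (m n : Z) (N : nat) (w : nat -> pt) : Prop :=
  tour_lift (m - 4) n N w /\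
  exists E : list edge, extending m n E /\
    exists U D : list edge, Permutation E (U ++ D) /\ length U = length D /\
      (forall e, In e U -> traverses_up (fun i => iota (w i)) N e) /\
      (forall e, In e D -> traverses_down (fun i => iota (w i)) N e).

(* A tour of M_{K,n} is handled through its lift to S_K, a walk whose end point is
   sigma^t of its start point; t = 0 for nullhomotopic and t = 1 or -1 for generating tours.
   Embedded in S_{K+4} by iota, the walk leaves the columns 0, 1, K+2, K+3 empty. Each edge
   of the extending collection, say between columns 2 and 3, going 2 rows up or down, is
   replaced by a zigzag through columns 0 and 1 that visits one class of the empty vertices
   of M_{K+4,n} and moves 2n or 4n rows in the opposite vertical direction; the rest of the
   walk is translated by the same even power of sigma, which does not change its projection.
   The detours visit all empty vertices, so the result is a tour of M_{K+4,n}. As half of the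
   edges go up and half go down, the translations cancel and the end point is still
   sigma^t of the start. The first edges of the detours form an extending collection for
   S_{K+8}, so the construction can be repeated. *)

From Stdlib Require Import ZArith List Permutation Lia Bool.
Import ListNotations.
Open Scope Z_scope.

(** * Orbits of [sigma] *)

Definition sigma_pow (K n t : Z) (p : pt) : pt :=
  (if Z.even t then fst p else K - 1 - fst p, snd p + t * n).

(* The representative of the orbit of [p] in the fundamental domain [0,K) x [0,n). *)
Definition orbit_rep (K n : Z) (p : pt) : pt :=
  (if Z.even (snd p / n) then fst p else K - 1 - fst p, snd p mod n).

Lemma sigma_pow_add K n a b p :
  sigma_pow K n a (sigma_pow K n b p) = sigma_pow K n (b + a) p.
Proof.
  destruct p as [x y]; unfold sigma_pow; simpl. rewrite Z.even_add.
  f_equal; [destruct (Z.even a), (Z.even b); simpl; lia | lia].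
Qed.

Lemma sigma_pow_0 K n p : sigma_pow K n 0 p = p.
Proof. destruct p; unfold sigma_pow; simpl; f_equal; lia. Qed.

Lemma sigma_pow_1 K n p : sigma_pow K n 1 p = sigma K n p.
Proof. unfold sigma, sigma_pow. now rewrite Z.mul_1_l. Qed.

Lemma iter_sigma K n j p : Nat.iter j (sigma K n) p = sigma_pow K n (Z.of_nat j) p.
Proof.
  induction j as [|j IH]; simpl; [now rewrite sigma_pow_0|].
  rewrite IH, <- sigma_pow_1, sigma_pow_add. f_equal. lia.
Qed.

Lemma orbit_rep_sigma_pow K n t p : n <> 0 -> orbit_rep K n (sigma_pow K n t p) = orbit_rep K n p.
Proof.
  intros Hn. destruct p as [x y]; unfold orbit_rep, sigma_pow; simpl.
  rewrite Z.div_add, Z.mod_add, Z.even_add by lia.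
  f_equal. destruct (Z.even t), (Z.even (y / n)); simpl; lia.
Qed.

Lemma orbit_rep_eq_sigma_pow K n p q : 0 < n -> orbit_rep K n p = orbit_rep K n q ->
  q = sigma_pow K n (snd q / n - snd p / n) p.
Proof.
  intros Hn. destruct p as [x y], q as [x' y']; unfold orbit_rep, sigma_pow; simpl.
  intros E; injection E as Hc Hm.
  pose proof (Z.div_mod y n ltac:(lia)). pose proof (Z.div_mod y' n ltac:(lia)).
  f_equal; [| nia].
  rewrite Z.even_sub. destruct (Z.even (y / n)), (Z.even (y' / n)); simpl in *; lia.
Qed.

Lemma same_orbit_orbit_rep K n p q : 0 < n ->
  same_orbit K n p q <-> orbit_rep K n p = orbit_rep K n q.
Proof.
  intros Hn; split.
  - intros [j [<- | <-]]; rewrite iter_sigma, orbit_rep_sigma_pow; auto; lia.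
  - intros E. pose proof (orbit_rep_eq_sigma_pow K n p q Hn E) as Eq.
    set (j := snd q / n - snd p / n) in Eq.
    destruct (Z_le_gt_dec 0 j).
    + exists (Z.to_nat j). left. rewrite iter_sigma, Z2Nat.id by lia. now symmetry.
    + exists (Z.to_nat (- j)). right. rewrite iter_sigma, Z2Nat.id by lia.
      rewrite Eq, sigma_pow_add, Z.add_opp_diag_r. apply sigma_pow_0.
Qed.

Lemma knight_adj_sigma_pow K n t p q :
  knight_adj p q -> knight_adj (sigma_pow K n t p) (sigma_pow K n t q).
Proof.
  unfold knight_adj, sigma_pow; destruct p as [a b], q as [c d]; simpl.
  replace (b + t * n - (d + t * n)) with (b - d) by lia.
  destruct (Z.even t); [tauto|].
  replace (K - 1 - a - (K - 1 - c)) with (- (a - c)) by lia.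
  rewrite Z.abs_opp. tauto.
Qed.

Lemma in_strip_sigma_pow K n t p : in_strip K p -> in_strip K (sigma_pow K n t p).
Proof. unfold in_strip, sigma_pow; destruct (Z.even t); simpl; lia. Qed.

Definition zrange (k : Z) : list Z := map Z.of_nat (seq 0 (Z.to_nat k)).

Lemma in_zrange k x : In x (zrange k) <-> 0 <= x < k.
Proof.
  unfold zrange. rewrite in_map_iff. split.
  - intros [i [<- Hi]]. apply in_seq in Hi. lia.
  - intros H. exists (Z.to_nat x). rewrite in_seq. lia.
Qed.

Lemma NoDup_zrange k : NoDup (zrange k).
Proof.
  apply NoDup_map_NoDup_ForallPairs; [|apply seq_NoDup].
  intros x y _ _ H. lia.
Qed.

Lemma NoDup_list_prod {A B} (l : list A) (l' : list B) :
  NoDup l -> NoDup l' -> NoDup (list_prod l l').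
Proof.
  intros Hl Hl'. induction Hl as [|a l Ha Hl IH]; simpl; [constructor|].
  apply NoDup_app; auto.
  - apply NoDup_map_NoDup_ForallPairs; auto. intros x y _ _ H; congruence.
  - intros [x y] Hx Hy. apply in_map_iff in Hx as [z [Hz _]]. injection Hz as <- _.
    exact (Ha (proj1 (proj1 (in_prod_iff l l' a y) Hy))).
Qed.

(* the fundamental domain, i.e. the vertices of M_{K,n} *)
Definition cells (K n : Z) := list_prod (zrange K) (zrange n).

Lemma in_cells K n p : In p (cells K n) <-> 0 <= fst p < K /\ 0 <= snd p < n.
Proof. destruct p; unfold cells. now rewrite in_prod_iff, !in_zrange. Qed.

Lemma NoDup_cells K n : NoDup (cells K n).
Proof. apply NoDup_list_prod; apply NoDup_zrange. Qed.

Lemma length_cells K n : 0 <= K -> 0 <= n -> length (cells K n) = Z.to_nat (K * n).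
Proof. intros. unfold cells, zrange. rewrite length_prod, !length_map, !length_seq. lia. Qed.

Lemma orbit_rep_in_cells K n p : 0 < n -> in_strip K p -> In (orbit_rep K n p) (cells K n).
Proof.
  intros Hn Hp. apply in_cells. unfold orbit_rep, in_strip in *. simpl.
  split; [destruct (Z.even (snd p / n)); lia | apply Z.mod_pos_bound; lia].
Qed.

Lemma orbit_rep_cell K n r : 0 < n -> In r (cells K n) -> orbit_rep K n r = r.
Proof.
  intros Hn Hr. apply in_cells in Hr. destruct r as [a b]; unfold orbit_rep; simpl in *.
  rewrite Z.div_small, Z.mod_small by lia. reflexivity.
Qed.

Lemma orbit_reps_cover K n c : 0 < n -> 0 <= K ->
  NoDup (map (orbit_rep K n) c) -> length c = Z.to_nat (K * n) ->
  (forall p, In p c -> in_strip K p) ->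
  incl (cells K n) (map (orbit_rep K n) c).
Proof.
  intros Hn HK Hc Hlen Hs. apply NoDup_length_incl; auto.
  - rewrite length_map, length_cells; lia.
  - intros x Hx. apply in_map_iff in Hx as [p [<- Hp]]. now apply orbit_rep_in_cells, Hs.
Qed.

Fixpoint chain {A} (R : A -> A -> Prop) (l : list A) : Prop :=
  match l with
  | x :: ((y :: _) as l') => R x y /\ chain R l'
  | _ => True
  end.

Section Chain.
Context {A : Type} (R : A -> A -> Prop).

Lemma chain_app_cons l1 x l2 :
  chain R (l1 ++ x :: l2) <-> chain R (l1 ++ [x]) /\ chain R (x :: l2).
Proof.
  induction l1 as [|a [|b l1] IH]; simpl in *; [tauto | tauto |].
  rewrite IH. tauto.
Qed.

Lemma chain_app l1 l2 d : chain R l1 -> chain R l2 ->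
  (l1 <> [] -> l2 <> [] -> R (last l1 d) (hd d l2)) -> chain R (l1 ++ l2).
Proof.
  induction l1 as [|a [|b l1] IH]; intros H1 H2 H3; simpl; auto.
  - destruct l2; simpl; auto. split; auto. apply H3; discriminate.
  - destruct H1 as [Hab H1]. split; auto. apply (IH H1 H2).
    intros _ Hl2. apply H3; [discriminate | auto].
Qed.

Lemma chain_tail x l : chain R (x :: l) -> chain R l.
Proof. destruct l; simpl; tauto. Qed.

Lemma chain_map {B} (R' : B -> B -> Prop) (f : A -> B) l :
  (forall p q, R p q -> R' (f p) (f q)) -> chain R l -> chain R' (map f l).
Proof.
  intros Hf. induction l as [|a [|b l] IH]; auto.
  intros [H1 H2]. split; [now apply Hf | now apply IH].
Qed.

Lemma chain_nth l d i : chain R l -> (S i < length l)%nat -> R (nth i l d) (nth (S i) l d).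
Proof.
  revert i. induction l as [|a [|b l] IH]; intros i Hc Hi; simpl in *; try lia.
  destruct Hc as [H1 H2]. destruct i; [exact H1|]. apply (IH i H2). simpl. lia.
Qed.

Lemma chain_map_seq (f : nat -> A) a len :
  (forall i, (a <= i)%nat -> (S i < a + len)%nat -> R (f i) (f (S i))) ->
  chain R (map f (seq a len)).
Proof.
  revert a. induction len as [|[|len] IH]; intros a H; simpl; auto.
  split; [apply H; lia|]. apply (IH (S a)). intros i H1 H2. apply H; lia.
Qed.

End Chain.

Lemma removelast_map {A B} (f : A -> B) l : removelast (map f l) = map f (removelast l).
Proof. induction l as [|a [|b l] IH]; simpl in *; auto. now rewrite IH. Qed.

Lemma in_removelast {A} (l : list A) p : In p (removelast l) -> In p l.
Proof. induction l as [|a [|b l] IH]; simpl in *; tauto. Qed.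

Lemma last_app_ne {A} (l1 l2 : list A) d : l2 <> [] -> last (l1 ++ l2) d = last l2 d.
Proof.
  intros H. induction l1 as [|a l1 IH]; simpl; auto. rewrite IH.
  destruct l1, l2; simpl; congruence.
Qed.

Lemma last_map {A B} (f : A -> B) l d d' : l <> [] -> last (map f l) d' = f (last l d).
Proof.
  intros Hl. induction l as [|a [|b l] IH]; [easy | reflexivity |].
  apply IH. discriminate.
Qed.

(** * Closed tours *)

(* A closed walk [v_0, ..., v_N] in [S_K] whose projection is a Hamiltonian cycle of
   [M_{K,n}], with [v_N = sigma^t v_0]. *)
Definition closed_tour (K n t : Z) (L : list pt) : Prop :=
  L <> [] /\ chain knight_adj L /\ (forall p, In p L -> in_strip K p) /\
  NoDup (map (orbit_rep K n) (removelast L)) /\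
  last L (0,0) = sigma_pow K n t (hd (0,0) L) /\
  length (removelast L) = Z.to_nat (K * n).

Lemma closed_tour_of_tour_lift K n N w t : 0 < n -> 0 < K -> tour_lift K n N w ->
  w N = sigma_pow K n t (0,0) -> closed_tour K n t (map w (seq 0 (S N))).
Proof.
  intros Hn HK [H0 [Hs [Ha [_ [Hi Hc]]]]] HN.
  assert (Hsplit : map w (seq 0 (S N)) = map w (seq 0 N) ++ [w N])
    by now rewrite seq_S, map_app.
  set (c := map w (seq 0 N)) in *.
  assert (Hreps : NoDup (map (orbit_rep K n) c)).
  { unfold c. rewrite map_map. apply NoDup_map_NoDup_ForallPairs; [|apply seq_NoDup].
    intros x y Hx Hy E. apply in_seq in Hx, Hy. apply Hi; try lia.
    now apply same_orbit_orbit_rep. }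
  assert (Hcells : incl (cells K n) (map (orbit_rep K n) c)).
  { intros r Hr. assert (Hrs : in_strip K r) by (apply in_cells in Hr; unfold in_strip; lia).
    destruct (Hc r Hrs) as [i [Hi1 Hi2]]. apply same_orbit_orbit_rep in Hi2; auto.
    rewrite orbit_rep_cell in Hi2 by auto. rewrite Hi2. apply in_map, in_map, in_seq. lia. }
  assert (Hlen : length c = N) by (unfold c; now rewrite length_map, length_seq).
  unfold closed_tour. rewrite Hsplit, removelast_last.
  split; [|split; [|split; [|split]]].
  - now destruct c.
  - rewrite <- Hsplit. apply chain_map_seq. intros i _ Hi'. apply Ha. lia.
  - intros p Hp. rewrite <- Hsplit in Hp.
    apply in_map_iff in Hp as [i [<- Hi']]. apply in_seq in Hi'. apply Hs. lia.
  - exact Hreps.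
  - split.
    + rewrite last_last. replace (hd (0,0) (c ++ [w N])) with (w 0%nat)
        by (unfold c; destruct N; reflexivity). now rewrite H0.
    + rewrite <- length_cells by lia. apply Nat.le_antisymm.
      * rewrite <- (length_map (orbit_rep K n)). apply NoDup_incl_length; auto.
        intros x Hx. apply in_map_iff in Hx as [p [<- Hp]]. unfold c in Hp.
        apply in_map_iff in Hp as [i [<- Hi']]. apply in_seq in Hi'.
        apply orbit_rep_in_cells, Hs; lia.
      * rewrite <- (length_map (orbit_rep K n) c). apply NoDup_incl_length; auto.
        apply NoDup_cells.
Qed.

Lemma tour_lift_of_closed_tour K n t L : 0 < n -> 0 < K -> closed_tour K n t L ->
  hd (0,0) L = (0,0) ->
  tour_lift K n (length (removelast L)) (fun i => nth i L (0,0)) /\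
  nth (length (removelast L)) L (0,0) = sigma_pow K n t (0,0).
Proof.
  intros Hn HK [Hne [Hch [Hs [Hk [Hl Hlen]]]]] Hhd.
  destruct (exists_last Hne) as [c [z ->]].
  rewrite removelast_last in *. rewrite last_last, Hhd in Hl.
  assert (H0 : nth 0 (c ++ [z]) (0,0) = (0,0)) by (destruct c; simpl in *; auto).
  assert (HN : nth (length c) (c ++ [z]) (0,0) = z) by now rewrite nth_middle.
  assert (Hlt : forall i, (i < length c)%nat -> nth i (c ++ [z]) (0,0) = nth i c (0,0))
    by (intros; now apply app_nth1).
  assert (Hcs : forall p, In p c -> in_strip K p) by (intros; apply Hs, in_or_app; auto).
  split; [|now rewrite HN].
  split; [|split; [|split; [|split; [|split]]]].
  - exact H0.
  - intros i Hi. apply Hs, nth_In. rewrite length_app; simpl; lia.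
  - intros i Hi. apply chain_nth; auto. rewrite length_app; simpl; lia.
  - apply same_orbit_orbit_rep; auto. rewrite HN, H0, Hl. now rewrite orbit_rep_sigma_pow by lia.
  - intros i j Hi Hj Ho. apply same_orbit_orbit_rep in Ho; auto.
    rewrite !Hlt in Ho by auto.
    apply (proj1 (NoDup_nth _ (orbit_rep K n (0,0))) Hk); rewrite ?length_map; auto.
    now rewrite !map_nth.
  - intros p Hp.
    destruct (in_map_iff (orbit_rep K n) c (orbit_rep K n p)) as [Hin _].
    destruct Hin as [x [Hx1 Hx2]].
    { apply (orbit_reps_cover K n c); auto; try lia. now apply orbit_rep_in_cells. }
    destruct (In_nth c x (0,0) Hx2) as [i [Hi1 Hi2]].
    exists i. split; auto. apply same_orbit_orbit_rep; auto. now rewrite Hlt, Hi2.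
Qed.

Lemma closed_tour_sigma_pow K n t j L : 0 < n -> closed_tour K n t L ->
  closed_tour K n t (map (sigma_pow K n j) L).
Proof.
  intros Hn [Hne [Hch [Hs [Hk [Hl Hlen]]]]].
  assert (Hrep : map (orbit_rep K n) (removelast (map (sigma_pow K n j) L))
                 = map (orbit_rep K n) (removelast L)).
  { rewrite removelast_map, map_map. apply map_ext. intros. apply orbit_rep_sigma_pow. lia. }
  split; [|split; [|split; [|split; [|split]]]].
  - now destruct L.
  - apply (chain_map knight_adj); auto. apply knight_adj_sigma_pow.
  - intros p Hp. apply in_map_iff in Hp as [q [<- Hq]]. now apply in_strip_sigma_pow, Hs.
  - now rewrite Hrep.
  - rewrite (last_map (sigma_pow K n j) L (0,0)), Hl by auto. destruct L as [|a L]; [easy|].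
    simpl. rewrite !sigma_pow_add. f_equal. lia.
  - now rewrite removelast_map, length_map.
Qed.

Lemma closed_tour_rotate K n t A x B z : 0 < n ->
  closed_tour K n t (A ++ x :: B ++ [z]) ->
  closed_tour K n t (x :: B ++ map (sigma_pow K n t) (A ++ [x])).
Proof.
  intros Hn [_ [Hch [Hs [Hk [Hl Hlen]]]]].
  assert (Hrl : forall C (y : pt), removelast (C ++ x :: B ++ [y]) = C ++ x :: B).
  { intros C y. now rewrite app_comm_cons, app_assoc, removelast_last. }
  assert (Hz : z = sigma_pow K n t (hd (0,0) (A ++ [x]))).
  { transitivity (last (A ++ x :: B ++ [z]) (0,0)).
    - now rewrite app_comm_cons, app_assoc, last_last.
    - rewrite Hl. now destruct A. }
  split; [|split; [|split; [|split; [|split]]]].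
  - discriminate.
  - destruct (A ++ [x]) as [|a R'] eqn:E; [now destruct A|].
    simpl in Hz. cbn [map]. apply (chain_app_cons _ (x :: B)). split.
    + rewrite <- Hz. apply chain_app_cons in Hch. exact (proj2 Hch).
    + change (chain knight_adj (map (sigma_pow K n t) (a :: R'))).
      apply (chain_map knight_adj); [apply knight_adj_sigma_pow|].
      rewrite <- E. apply chain_app_cons in Hch. tauto.
  - assert (Hs' : forall q, In q (A ++ [x]) \/ In q B -> in_strip K q).
    { intros q Hq. apply Hs. rewrite in_app_iff in *. simpl in *. rewrite in_app_iff. tauto. }
    intros p Hp. simpl in Hp. rewrite in_app_iff, in_map_iff in Hp.
    destruct Hp as [<- | [Hp | [q [<- Hq]]]].
    + apply Hs'. left. apply in_or_app. simpl. auto.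
    + auto.
    + auto using in_strip_sigma_pow.
  - rewrite Hrl in Hk. rewrite map_app, app_comm_cons, app_assoc. cbn [map].
    rewrite removelast_last.
    rewrite map_app, map_map.
    rewrite (map_ext (fun p => orbit_rep K n (sigma_pow K n t p)) (orbit_rep K n))
      by (intros; apply orbit_rep_sigma_pow; lia).
    eapply Permutation_NoDup; [|exact Hk]. rewrite map_app. apply Permutation_app_comm.
  - rewrite map_app, app_comm_cons, app_assoc. cbn [map]. now rewrite last_last.
  - rewrite Hrl in Hlen. rewrite <- Hlen, map_app, app_comm_cons, app_assoc. cbn [map].
    rewrite removelast_last.
    rewrite !length_app, length_map. simpl. lia.
Qed.

Lemma closed_tour_based K n t L : 0 < n -> 0 < K -> closed_tour K n t L ->
  exists L', closed_tour K n t L' /\ hd (0,0) L' = (0,0).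
Proof.
  intros Hn HK HL. pose proof HL as [Hne [_ [Hs [Hk [_ Hlen]]]]].
  destruct (exists_last Hne) as [c [z ->]]. rewrite removelast_last in Hk, Hlen.
  assert (H00 : In (0,0) (map (orbit_rep K n) c)).
  { apply (orbit_reps_cover K n c); auto; try lia.
    - intros p Hp. apply Hs, in_or_app. auto.
    - apply in_cells. simpl. lia. }
  apply in_map_iff in H00 as [x [Hx Hxc]].
  apply in_split in Hxc as [A [B ->]].
  rewrite <- app_assoc in HL. simpl in HL.
  set (j := 0 / n - snd x / n).
  exists (map (sigma_pow K n j) (x :: B ++ map (sigma_pow K n t) (A ++ [x]))).
  split; [apply closed_tour_sigma_pow, (closed_tour_rotate K n t A x B z); auto|].
  simpl. symmetry. apply (orbit_rep_eq_sigma_pow K n x (0,0) Hn).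
  rewrite Hx. symmetry. apply orbit_rep_cell; auto. apply in_cells. simpl. lia.
Qed.

(** * Detours through the new columns *)

Ltac lia_mod := Z.div_mod_to_equations; lia.

Ltac case_if := repeat match goal with
  | |- context [if ?b then _ else _] => let E := fresh "E" in destruct b eqn:E
  end;
  repeat match goal with
  | H : (_ =? _) = true |- _ => apply Z.eqb_eq in H
  | H : (_ =? _) = false |- _ => apply Z.eqb_neq in H
  | H : (_ <=? _) = true |- _ => apply Z.leb_le in H
  | H : (_ <=? _) = false |- _ => apply Z.leb_gt in H
  end.

(* The [4n] vertices of [M_{M,n}] in the new columns [0, 1, M-2, M-1] of [S_M] fall into
   [num_classes n] classes of [laps n * n] vertices each; a detour sweeps one class,
   zigzagging through two adjacent new columns and moving [2 * laps n * n] rows, a multiple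
   of [2n]. *)
Definition laps (n : Z) := if Z.even n then 1 else 2.
Definition num_classes (n : Z) := if Z.even n then 4 else 2.

Lemma parity_cases n :
  (Z.even n = true /\ num_classes n = 4 /\ laps n = 1 /\ exists h, n = 2 * h) \/
  (Z.even n = false /\ num_classes n = 2 /\ laps n = 2 /\ exists h, n = 2 * h + 1).
Proof.
  unfold num_classes, laps. destruct (Z.even n) eqn:E.
  - left. apply Z.even_spec in E. auto.
  - right. rewrite <- Z.negb_odd in E. apply negb_false_iff, Z.odd_spec in E. auto.
Qed.

Lemma detour_length_even n : 1 <= n -> exists h, laps n * n = 2 * h /\ 1 <= h.
Proof.
  intros Hn. destruct (parity_cases n) as [[_ [_ [-> [h ->]]]] | [_ [_ [-> _]]]].
  - exists h. lia.
  - exists n. lia.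
Qed.

Lemma mod_num_classes_add x z n : (x + z * (2 * n)) mod num_classes n = x mod num_classes n.
Proof.
  destruct (parity_cases n) as [[_ [-> [_ [h ->]]]] | [_ [-> [_ [h ->]]]]].
  - replace (x + z * (2 * (2 * h))) with (x + (z * h) * 4) by ring. apply Z.mod_add; lia.
  - replace (x + z * (2 * (2 * h + 1))) with (x + (z * (2 * h + 1)) * 2) by ring.
    apply Z.mod_add; lia.
Qed.

Definition reflect_col (right : bool) (M : Z) (p : pt) : pt :=
  (if right then M - 1 - fst p else fst p, snd p).
Definition shift_rows (d : Z) (p : pt) : pt := (fst p, snd p + d).

Definition in_band (M : Z) (p : pt) := 0 <= fst p <= 1 \/ M - 2 <= fst p <= M - 1.
Definition in_core (M : Z) (p : pt) := 2 <= fst p <= M - 3.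

(* [row - 2 col] is constant modulo [num_classes n] along a detour, and [sigma] exchanges
   the left and right new columns while adding [n] rows. *)
Definition band_class (M n : Z) (p : pt) :=
  (if fst p <=? 1 then snd p - 2 * fst p else snd p - n - 2 * (M - 1 - fst p))
    mod num_classes n.

(* An edge [src -> dst] of the walk between columns 2 and 3 (or, if [br_right], their
   mirror images [M-3] and [M-4]), going [2 * br_dir] rows, at which a detour through
   class [br_class] will be inserted. *)
Record bridge := Bridge
  { br_src : pt; br_dst : pt; br_dir : Z; br_class : Z; br_right : bool }.

Definition br_col (M : Z) (b : bridge) := fst (reflect_col (br_right b) M (br_src b)) - 2.

Definition br_parity (M n : Z) (b : bridge) :=
  snd (br_src b) + 1 - 2 * br_col M b - (if br_right b then n else 0).

Definition bridge_ok (M n : Z) (b : bridge) :=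
  (br_dir b = 1 \/ br_dir b = -1) /\ snd (br_dst b) = snd (br_src b) + 2 * br_dir b /\
  0 <= br_col M b <= 1 /\ fst (reflect_col (br_right b) M (br_dst b)) = 3 - br_col M b /\
  0 <= br_class b < num_classes n /\ (br_class b - br_parity M n b) mod 2 = 0.

(* the first vertical step of the detour, chosen to land in class [br_class] *)
Definition detour_bend (M n : Z) (b : bridge) :=
  if br_parity M n b mod num_classes n =? br_class b then 1 else -1.

Definition detour_pt (M n : Z) (b : bridge) (i : nat) : pt :=
  reflect_col (br_right b) M
    ((br_col M b + Z.of_nat i) mod 2,
     snd (br_src b) + detour_bend M n b - 2 * br_dir b * Z.of_nat i).

Definition detour (M n : Z) (b : bridge) : list pt :=
  map (detour_pt M n b) (seq 0 (Z.to_nat (laps n * n))).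

Definition detour_shift (n : Z) (b : bridge) := - br_dir b * laps n * (2 * n).

Section Detour.
Variables (M n : Z) (b : bridge).
Hypotheses (HM : 7 <= M) (Hn : 1 <= n) (Hb : bridge_ok M n b).

Lemma detour_bend_cases : detour_bend M n b = 1 \/ detour_bend M n b = -1.
Proof. unfold detour_bend. case_if; auto. Qed.

Lemma chain_detour : chain knight_adj (detour M n b).
Proof.
  apply chain_map_seq. intros i _ _.
  destruct Hb as [Hs _]. unfold knight_adj, detour_pt, reflect_col.
  rewrite Nat2Z.inj_succ. destruct Hs as [-> | ->]; destruct (br_right b); cbn [fst snd]; left; lia_mod.
Qed.

Lemma knight_adj_src_detour : knight_adj (br_src b) (detour_pt M n b 0).
Proof.
  destruct Hb as [_ [_ [Hc _]]]. pose proof detour_bend_cases as Hu.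
  unfold knight_adj, detour_pt, br_col, reflect_col in *.
  change (Z.of_nat 0) with 0. rewrite Z.mul_0_r.
  destruct (br_src b) as [x1 x2], (br_right b); cbn [fst snd] in *; right; lia_mod.
Qed.

Lemma last_detour :
  last (detour M n b) (0,0) = detour_pt M n b (Nat.pred (Z.to_nat (laps n * n))).
Proof.
  destruct (detour_length_even n Hn) as [h [Hh Hh1]]. unfold detour. rewrite Hh.
  replace (Z.to_nat (2 * h)) with (S (Nat.pred (Z.to_nat (2 * h)))) at 1 by lia.
  rewrite seq_S, map_app. cbn [map]. now rewrite last_last.
Qed.

Lemma knight_adj_detour_dst :
  knight_adj (last (detour M n b) (0,0)) (shift_rows (detour_shift n b) (br_dst b)).
Proof.
  rewrite last_detour. destruct (detour_length_even n Hn) as [h [Hh Hh1]].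
  destruct Hb as [Hs [Hy [Hc [Hcy _]]]]. pose proof detour_bend_cases as Hu.
  unfold knight_adj, detour_pt, reflect_col, shift_rows, detour_shift, br_col in *.
  replace (- br_dir b * laps n * (2 * n)) with (- br_dir b * (2 * (2 * h))) by (rewrite <- Hh; ring).
  rewrite Hh. replace (Z.of_nat (Nat.pred (Z.to_nat (2 * h)))) with (2 * h - 1) by lia.
  destruct (br_src b) as [x1 x2], (br_dst b) as [y1 y2].
  destruct Hs as [Hs | Hs]; rewrite Hs in *; destruct (br_right b); cbn [fst snd] in *; right; lia_mod.
Qed.

Lemma detour_pt_band i : in_band M (detour_pt M n b i) /\ in_strip M (detour_pt M n b i).
Proof. unfold in_band, in_strip, detour_pt, reflect_col. destruct (br_right b); cbn [fst snd]; lia_mod. Qed.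

Lemma length_detour : length (detour M n b) = Z.to_nat (laps n * n).
Proof. unfold detour. now rewrite length_map, length_seq. Qed.

Lemma detour_head : exists D, detour M n b = detour_pt M n b 0 :: detour_pt M n b 1 :: D.
Proof.
  destruct (detour_length_even n Hn) as [h [Hh Hh1]]. unfold detour. rewrite Hh.
  replace (Z.to_nat (2 * h)) with (S (S (Z.to_nat (2 * h) - 2))) by lia.
  eexists. reflexivity.
Qed.

Lemma band_class_detour_pt i : band_class M n (detour_pt M n b i) = br_class b.
Proof.
  destruct Hb as [Hs [_ [Hc [_ [Hsg Hv]]]]].
  unfold band_class, detour_pt, detour_bend, br_parity in *. set (c := br_col M b) in *.
  destruct b as [[x1 x2] [y1 y2] s sg rt]; cbn [br_src br_dst br_dir br_class br_right fst snd] in *.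
  destruct (parity_cases n) as [[_ [Hq [_ [h Hh]]]] | [_ [Hq [_ [h Hh]]]]]; rewrite Hq in *;
    destruct Hs as [-> | ->]; destruct rt; cbn [reflect_col fst snd] in *; case_if; lia_mod.
Qed.

End Detour.

Lemma band_class_sigma_pow M n t p : 7 <= M -> in_band M p -> band_class M n (sigma_pow M n t p) = band_class M n p.
Proof.
  intros HM Hb. destruct p as [x y]. unfold in_band in Hb. cbn [fst snd] in Hb.
  assert (Ht : exists k, t = 2 * k \/ t = 2 * k + 1) by (exists (t / 2); lia_mod).
  destruct Ht as [k [-> | ->]];
    unfold band_class, sigma_pow; rewrite ?Z.even_add, Z.even_mul; cbn [fst snd Z.even orb Bool.eqb]; case_if;
    match goal with |- ?A mod _ = ?B mod _ =>
      first [ transitivity ((B + k * (2 * n)) mod num_classes n);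
                [f_equal; lia | apply mod_num_classes_add]
            | transitivity ((B + (k + 1) * (2 * n)) mod num_classes n);
                [f_equal; lia | apply mod_num_classes_add]
            | lia ] end.
Qed.

Lemma band_class_orbit_rep_eq M n p q : 7 <= M -> 1 <= n -> in_band M p ->
  orbit_rep M n p = orbit_rep M n q -> band_class M n q = band_class M n p.
Proof.
  intros HM Hn Hb E. rewrite (orbit_rep_eq_sigma_pow M n p q ltac:(lia) E).
  now apply band_class_sigma_pow.
Qed.

Lemma orbit_rep_core_band M n p q : in_core M p -> in_band M q ->
  orbit_rep M n p <> orbit_rep M n q.
Proof.
  intros Hp Hq E. unfold orbit_rep, in_core, in_band in *. injection E as E _. revert E. case_if; lia.
Qed.

Lemma in_band_core M p : 7 <= M -> in_band M p -> in_core M p -> False.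
Proof. unfold in_band, in_core. lia. Qed.

Lemma bridge_src_core M n b : 7 <= M -> bridge_ok M n b -> in_core M (br_src b).
Proof.
  intros HM [_ [_ [Hc _]]]. unfold br_col, reflect_col, in_core in *.
  destruct (br_right b); cbn [fst] in Hc; lia.
Qed.

Lemma NoDup_detour_reps M n b : 7 <= M -> 1 <= n -> bridge_ok M n b ->
  NoDup (map (orbit_rep M n) (detour M n b)).
Proof.
  (* Two detour points in one orbit differ by [sigma^k] with [|k n| < 2 * laps n * n].
     An odd [k] would leave the new columns, and [k = 2] or [-2] (possible for odd [n] only)
     would relate points [n] steps apart, which lie in different columns. *)
  intros HM Hn Hb. unfold detour. rewrite map_map.
  apply NoDup_map_NoDup_ForallPairs; [|apply seq_NoDup].
  intros i j Hi Hj E. apply in_seq in Hi, Hj.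
  pose proof (orbit_rep_eq_sigma_pow M n _ _ ltac:(lia) E) as E2.
  set (k := snd (detour_pt M n b j) / n - snd (detour_pt M n b i) / n) in E2. clearbody k.
  destruct (detour_length_even n Hn) as [h [Hh Hh1]].
  destruct Hb as [Hs _].
  unfold detour_pt, reflect_col, sigma_pow in E2.
  set (c := br_col M b) in *. set (u := detour_bend M n b) in *.
  rewrite Hh in Hi, Hj.
  assert (Hk : exists k', k = 2 * k' \/ k = 2 * k' + 1) by (exists (k / 2); lia_mod).
  destruct Hk as [k' [-> | ->]]; rewrite ?Z.even_add, Z.even_mul in E2; cbn [Z.even orb Bool.eqb] in E2;
    destruct (br_right b); cbn [fst snd] in E2;
    pose proof (f_equal fst E2) as E4; pose proof (f_equal snd E2) as E3; cbn [fst snd] in E3, E4;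
    try lia_mod.
  all: destruct (parity_cases n) as [[_ [_ [Hr [h' ->]]]] | [_ [_ [Hr [h' ->]]]]]; rewrite Hr in *;
    destruct Hs as [Hs | Hs]; rewrite Hs in *;
    assert (k' = 0 \/ k' = 1 \/ k' = -1) as [-> | [-> | ->]] by nia; lia_mod.
Qed.

Lemma knight_adj_shift_rows d p q : knight_adj p q -> knight_adj (shift_rows d p) (shift_rows d q).
Proof.
  unfold knight_adj, shift_rows. cbn [fst snd].
  now replace (snd p + d - (snd q + d)) with (snd p - snd q) by lia.
Qed.

Lemma knight_adj_iota p q : knight_adj p q -> knight_adj (iota p) (iota q).
Proof.
  unfold knight_adj, iota. cbn [fst snd].
  now replace (fst p + 2 - (fst q + 2)) with (fst p - fst q) by lia.
Qed.

Lemma iota_inj p q : iota p = iota q -> p = q.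
Proof. destruct p, q; unfold iota; simpl. intros H. injection H as H1 H2. f_equal; lia. Qed.

Lemma orbit_rep_iota K n p : orbit_rep (K + 4) n (iota p) = iota (orbit_rep K n p).
Proof. unfold orbit_rep, iota. cbn [fst snd]. destruct (Z.even (snd p / n)); f_equal; lia. Qed.

Lemma sigma_pow_iota K n t p : sigma_pow (K + 4) n t (iota p) = iota (sigma_pow K n t p).
Proof. unfold sigma_pow, iota. cbn [fst snd]. destruct (Z.even t); f_equal; lia. Qed.

Lemma shift_rows_sigma_pow M n z t p :
  shift_rows (z * (2 * n)) (sigma_pow M n t p) = sigma_pow M n (t + 2 * z) p.
Proof.
  unfold shift_rows, sigma_pow. cbn [fst snd]. rewrite Z.even_add, Z.even_mul. cbn [Z.even orb].
  f_equal; [now destruct (Z.even t) | ring].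
Qed.

Lemma orbit_rep_shift_rows M n z p : n <> 0 ->
  orbit_rep M n (shift_rows (z * (2 * n)) p) = orbit_rep M n p.
Proof.
  intros Hn. rewrite <- (sigma_pow_0 M n p) at 1. rewrite shift_rows_sigma_pow.
  now apply orbit_rep_sigma_pow.
Qed.

Lemma band_class_shift_rows M n z p :
  band_class M n (shift_rows (z * (2 * n)) p) = band_class M n p.
Proof.
  unfold band_class, shift_rows; cbn [fst snd]. destruct (fst p <=? 1).
  - replace (snd p + z * (2 * n) - 2 * fst p) with ((snd p - 2 * fst p) + z * (2 * n)) by ring.
    apply mod_num_classes_add.
  - replace (snd p + z * (2 * n) - n - 2 * (M - 1 - fst p))
      with ((snd p - n - 2 * (M - 1 - fst p)) + z * (2 * n)) by ring.
    apply mod_num_classes_add.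
Qed.

Definition bridge_map (f : pt -> pt) (b : bridge) :=
  Bridge (f (br_src b)) (f (br_dst b)) (br_dir b) (br_class b) (br_right b).

Lemma bridge_ok_shift_rows M n z b : bridge_ok M n b ->
  bridge_ok M n (bridge_map (shift_rows (z * (2 * n))) b).
Proof.
  unfold bridge_ok, bridge_map, br_parity, br_col, shift_rows, reflect_col.
  cbn [br_src br_dst br_dir br_class br_right fst snd].
  intros [H1 [H2 [H3 [H4 [H5 H6]]]]]. repeat split; try lia.
  match goal with |- ?A mod 2 = 0 => match type of H6 with ?B mod 2 = 0 =>
    replace A with (B + (- z * n) * 2) by ring; now rewrite Z.mod_add by lia end end.
Qed.

(* The first edge of the detour through [b] becomes a bridge of the next widening step;
   adding 1 to the class restores the parity condition of [bridge_ok]. *)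
Definition next_bridge (M n : Z) (b : bridge) :=
  Bridge (detour_pt M n b 0) (detour_pt M n b 1) (- br_dir b)
    ((br_class b + 1) mod num_classes n) (br_right b).

Lemma bridge_ok_next M n b : 7 <= M -> 1 <= n -> bridge_ok M n b ->
  bridge_ok (M + 4) n (bridge_map iota (next_bridge M n b)).
Proof.
  intros HM Hn Hb. pose proof (band_class_detour_pt M n b HM Hb 0) as Hsd.
  pose proof (detour_bend_cases M n b) as Hu.
  destruct Hb as [Hs [Hy [Hc [Hcy [Hsg Hv]]]]].
  unfold band_class, detour_pt in Hsd.
  unfold bridge_ok, bridge_map, next_bridge, detour_pt, iota. cbn [br_src br_dst br_dir br_class br_right].
  unfold br_col, br_parity in *. cbn [br_src br_dst br_dir br_class br_right] in *.
  set (c := fst (reflect_col (br_right b) M (br_src b)) - 2) in *. set (u := detour_bend M n b) in *.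
  destruct (parity_cases n) as [[_ [Hq _]] | [_ [Hq _]]]; rewrite Hq in *;
    destruct (br_right b); unfold reflect_col in *; cbn [fst snd] in *; case_if;
    (split; [lia|]); (split; [lia|]); (split; [lia_mod|]); (split; [lia_mod|]); (split; [lia_mod|]); lia_mod.
Qed.

(** * Inserting detours into a walk *)

Definition consecutive {A} (u v : A) (l : list A) := exists l1 l2, l = l1 ++ u :: v :: l2.

Section Splice.
Context {A : Type}.

Lemma consecutive_map {B} (f : A -> B) u v l :
  consecutive u v l -> consecutive (f u) (f v) (map f l).
Proof. intros [l1 [l2 ->]]. exists (map f l1), (map f l2). now rewrite map_app. Qed.

Lemma consecutive_map_seq (f : nat -> A) N i :
  (i < N)%nat -> consecutive (f i) (f (S i)) (map f (seq 0 (S N))).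
Proof.
  intros Hi. replace (S N) with (i + S (S (N - S i)))%nat by lia.
  rewrite seq_app, map_app. exists (map f (seq 0 i)), (map f (seq (S (S i)) (N - S i))).
  reflexivity.
Qed.

Lemma consecutive_app_inv (l1 l2 l1' l2' : list A) u v x y :
  l1 ++ u :: v :: l2 = l1' ++ x :: y :: l2' -> (u, v) <> (x, y) ->
  consecutive u v (l1' ++ [x]) \/ consecutive u v (y :: l2').
Proof.
  revert l1'. induction l1 as [|c l1 IH]; intros l1' E Hne; simpl in E.
  - destruct l1' as [|c [|d l1']]; simpl in E; injection E; intros; subst.
    + congruence.
    + left. now exists [], [].
    + left. now exists [], (l1' ++ [x]).
  - destruct l1' as [|c' l1']; simpl in E; injection E as <- E.
    + right. now exists l1, l2.
    + destruct (IH l1' E Hne) as [[k1 [k2 H]] | H]; auto.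
      left. exists (c :: k1), k2. simpl. now rewrite H.
Qed.

Definition splice (l1 : list A) (x : A) (D : list A) (f : A -> A) (y : A) (l2 : list A) :=
  l1 ++ x :: D ++ map f (y :: l2).

Lemma consecutive_splice u v l1 x y l2 D f :
  consecutive u v (l1 ++ x :: y :: l2) -> (u, v) <> (x, y) ->
  consecutive u v (splice l1 x D f y l2) \/ consecutive (f u) (f v) (splice l1 x D f y l2).
Proof.
  intros [k1 [k2 E]] Hne. unfold splice.
  destruct (consecutive_app_inv _ _ _ _ _ _ _ _ (eq_sym E) Hne) as [[m1 [m2 H]] | [m1 [m2 H]]].
  - left. exists m1, (m2 ++ D ++ map f (y :: l2)).
    replace (l1 ++ x :: D ++ map f (y :: l2)) with ((l1 ++ [x]) ++ D ++ map f (y :: l2))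
      by now rewrite <- app_assoc.
    now rewrite H, <- app_assoc.
  - right. rewrite H, map_app. exists (l1 ++ x :: D ++ map f m1), (map f m2).
    rewrite <- app_assoc. simpl. now rewrite <- app_assoc.
Qed.

Lemma chain_splice (R : A -> A -> Prop) l1 x y l2 D f d :
  chain R (l1 ++ x :: y :: l2) -> chain R D -> D <> [] ->
  R x (hd d D) -> R (last D d) (f y) -> (forall p q, R p q -> R (f p) (f q)) ->
  chain R (splice l1 x D f y l2).
Proof.
  intros Hc HD Hne Hx Hy Hf. apply chain_app_cons in Hc as [H1 H2].
  unfold splice. replace (l1 ++ x :: D ++ map f (y :: l2))
    with ((l1 ++ [x]) ++ D ++ map f (y :: l2)) by now rewrite <- app_assoc.
  apply (chain_app _ _ _ d); auto.
  - apply (chain_app _ _ _ d); auto.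
    apply (chain_map R R f); auto. exact (chain_tail R x _ H2).
  - intros _ _. rewrite last_last. destruct D; [easy | exact Hx].
Qed.

Lemma removelast_splice l1 x D f y l2 :
  removelast (splice l1 x D f y l2) = l1 ++ x :: D ++ map f (removelast (y :: l2)).
Proof.
  unfold splice. rewrite app_comm_cons, app_assoc, removelast_app by discriminate.
  now rewrite removelast_map, <- app_assoc.
Qed.

Lemma removelast_app_cons (l1 : list A) x y l2 :
  removelast (l1 ++ x :: y :: l2) = l1 ++ x :: removelast (y :: l2).
Proof. now rewrite removelast_app by discriminate. Qed.

Lemma NoDup_map_splice {B} (g : A -> B) l1 x D f y l2 :
  (forall p, g (f p) = g p) -> NoDup (map g D) ->
  NoDup (map g (removelast (l1 ++ x :: y :: l2))) ->
  (forall p q, In p D -> In q (removelast (l1 ++ x :: y :: l2)) -> g p <> g q) ->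
  NoDup (map g (removelast (splice l1 x D f y l2))).
Proof.
  rewrite removelast_app_cons. intros Hf HD Hl Hdisj.
  rewrite removelast_splice, map_app. cbn [map]. rewrite map_app, map_map, (map_ext _ g Hf).
  rewrite map_app in Hl. cbn [map] in Hl.
  set (R := map g (removelast (y :: l2))) in *.
  replace (map g l1 ++ g x :: map g D ++ R) with ((map g l1 ++ [g x]) ++ map g D ++ R)
    by now rewrite <- app_assoc.
  apply (Permutation_NoDup (Permutation_app_swap_app _ _ _)).
  apply NoDup_app; auto.
  - now rewrite <- app_assoc.
  - intros r Hr1 Hr2. apply in_map_iff in Hr1 as [p [<- Hp]].
    assert (Hr : In (g p) (map g (l1 ++ x :: removelast (y :: l2))))
      by (rewrite map_app; rewrite <- app_assoc in Hr2; exact Hr2).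
    apply in_map_iff in Hr as [q [Eq Hq]]. now apply (Hdisj p q).
Qed.

Lemma last_splice l1 x D f y l2 d d' :
  last (splice l1 x D f y l2) d' = f (last (l1 ++ x :: y :: l2) d).
Proof.
  unfold splice. rewrite app_comm_cons, app_assoc, !last_app_ne by discriminate.
  now rewrite (last_map f _ d).
Qed.

Lemma hd_splice l1 x D f y l2 d : hd d (splice l1 x D f y l2) = hd d (l1 ++ x :: y :: l2).
Proof. now destruct l1. Qed.

End Splice.

(** * One widening step *)

Definition zsum (l : list Z) := fold_right Z.add 0 l.

(* State of one widening step [S_{M-4} -> S_M] after the detours at some of the bridges
   have been inserted: [V] is the current walk, [P] the bridges still to be processed,
   [O] the bridges created for the next step and [S] the classes already swept. *)
Set Implicit Arguments.
Record splice_inv (M n t0 : Z) (V : list pt) (t : Z) (P O : list bridge) (S : list Z) := {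
  si_nonempty : V <> [];
  si_chain : chain knight_adj V;
  si_points : forall p, In p V ->
    in_strip M p /\ (in_core M p \/ (in_band M p /\ In (band_class M n p) S));
  si_reps : NoDup (map (orbit_rep M n) (removelast V));
  si_last : last V (0,0) = sigma_pow M n t (hd (0,0) V);
  si_length :
    length (removelast V) = (Z.to_nat ((M - 4) * n) + length O * Z.to_nat (laps n * n))%nat;
  si_pending : forall b, In b P ->
    consecutive (br_src b) (br_dst b) V /\ bridge_ok M n b /\ ~ In (br_class b) S;
  si_pending_classes : NoDup (map br_class P);
  si_pending_reps : NoDup (map (fun b => orbit_rep M n (br_src b)) P);
  si_done : forall o, In o O ->
    consecutive (br_src o) (br_dst o) V /\ bridge_ok (M + 4) n (bridge_map iota o) /\
    in_band M (br_src o) /\ In (band_class M n (br_src o)) S /\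
    br_class o = (band_class M n (br_src o) + 1) mod num_classes n;
  si_done_classes : NoDup (map (fun o => band_class M n (br_src o)) O);
  si_winding : t = t0 + 2 * laps n * zsum (map br_dir O);
  si_dir_sum : zsum (map br_dir P) = zsum (map br_dir O);
  si_count : (length P + length O = Z.to_nat (num_classes n))%nat
}.
Unset Implicit Arguments.

Definition relocated (d : Z) (V : list pt) (b b' : bridge) :=
  (b' = b \/ b' = bridge_map (shift_rows d) b) /\ consecutive (br_src b') (br_dst b') V.

Lemma relocate_bridges (Q : list bridge) l1 x y l2 D f d :
  f = shift_rows d ->
  (forall b, In b Q -> consecutive (br_src b) (br_dst b) (l1 ++ x :: y :: l2) /\
                       (br_src b, br_dst b) <> (x, y)) ->
  exists Q', Forall2 (relocated d (splice l1 x D f y l2)) Q Q'.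
Proof.
  intros -> HQ. induction Q as [|b Q IH]; [now exists []|].
  destruct IH as [Q' HQ']; [intros; apply HQ; now right|].
  destruct (HQ b (in_eq _ _)) as [Hc Hne].
  destruct (consecutive_splice _ _ _ _ _ _ D (shift_rows d) Hc Hne) as [H | H].
  - exists (b :: Q'). constructor; [split|]; auto.
  - exists (bridge_map (shift_rows d) b :: Q'). constructor; [split|]; auto.
Qed.

Lemma relocated_map {C} d V (g : bridge -> C) Q Q' :
  (forall b, g (bridge_map (shift_rows d) b) = g b) ->
  Forall2 (relocated d V) Q Q' -> map g Q' = map g Q.
Proof.
  intros Hg HQ. induction HQ as [|b b' Q Q' [[-> | ->] _] _ IH]; simpl; f_equal; auto.
Qed.

Lemma Forall2_in_r {A B} {R : A -> B -> Prop} {l l' y} :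
  Forall2 R l l' -> In y l' -> exists x, In x l /\ R x y.
Proof.
  intros H. induction H as [|x0 y0 l l' H _ IH]; simpl; [tauto|].
  intros [<- | Hy]; [exists x0; auto|]. destruct (IH Hy) as [x [? ?]]. exists x. auto.
Qed.

Section Splice_step.
Variables (M n t0 t : Z) (A B : list pt) (a : bridge) (P O : list bridge) (S : list Z).
Hypotheses (HM : 7 <= M) (Hn : 1 <= n)
  (I : splice_inv M n t0 (A ++ br_src a :: br_dst a :: B) t (a :: P) O S).

Local Notation V := (A ++ br_src a :: br_dst a :: B).
Local Notation T := (shift_rows (detour_shift n a)).
Local Notation V' := (splice A (br_src a) (detour M n a) T (br_dst a) B).

Lemma step_bridge_ok : bridge_ok M n a.
Proof. apply (si_pending I a (in_eq _ _)). Qed.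

Lemma step_class_new : ~ In (br_class a) S.
Proof. apply (si_pending I a (in_eq _ _)). Qed.

Lemma in_step_walk p : In p A \/ p = br_src a \/ In p (br_dst a :: B) -> In p V.
Proof. intros [Hp | [-> | Hp]]; apply in_or_app; simpl; auto. Qed.

Lemma step_chain : chain knight_adj V'.
Proof.
  pose proof step_bridge_ok as Ha. destruct (detour_head M n a Hn) as [D HD].
  apply (chain_splice _ _ _ _ _ _ _ (0,0)).
  - exact (si_chain I).
  - now apply chain_detour.
  - now rewrite HD.
  - rewrite HD. now apply knight_adj_src_detour.
  - now apply knight_adj_detour_dst.
  - apply knight_adj_shift_rows.
Qed.

Lemma step_points p : In p V' ->
  in_strip M p /\ (in_core M p \/ (in_band M p /\ In (band_class M n p) (br_class a :: S))).
Proof.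
  pose proof step_bridge_ok as Ha.
  assert (Hold : forall q, In q V ->
    in_strip M q /\ (in_core M q \/ (in_band M q /\ In (band_class M n q) (br_class a :: S)))).
  { intros q Hq. destruct (si_points I q Hq) as [H1 [H2 | [H2 H3]]]; simpl; auto. }
  unfold splice. rewrite in_app_iff. cbn [In]. rewrite in_app_iff.
  intros [Hp | [<- | [Hp | Hp]]]; try (apply Hold, in_step_walk; tauto).
  - unfold detour in Hp. apply in_map_iff in Hp as [i [<- _]].
    destruct (detour_pt_band M n a HM i). rewrite band_class_detour_pt by auto. simpl. auto.
  - apply in_map_iff in Hp as [q [<- Hq]].
    destruct (Hold q (in_step_walk q (or_intror (or_intror Hq)))) as [H1 H2].
    unfold detour_shift. rewrite band_class_shift_rows.
    unfold in_strip, in_core, in_band, shift_rows in *. simpl. tauto.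
Qed.

Lemma step_reps : NoDup (map (orbit_rep M n) (removelast V')).
Proof.
  pose proof step_bridge_ok as Ha.
  apply NoDup_map_splice.
  - intros. unfold detour_shift. apply orbit_rep_shift_rows. lia.
  - now apply NoDup_detour_reps.
  - exact (si_reps I).
  - intros p q Hp Hq E. unfold detour in Hp. apply in_map_iff in Hp as [i [<- _]].
    destruct (detour_pt_band M n a HM i) as [Hb _].
    destruct (si_points I q (in_removelast _ _ Hq)) as [_ [Hqc | [Hqb HqS]]].
    + exact (orbit_rep_core_band M n q _ Hqc Hb (eq_sym E)).
    + apply step_class_new. rewrite <- (band_class_detour_pt M n a HM Ha i).
      now rewrite (band_class_orbit_rep_eq M n q _ HM Hn Hqb (eq_sym E)).
Qed.

Lemma step_last :
  last V' (0,0) = sigma_pow M n (t + 2 * (- br_dir a * laps n)) (hd (0,0) V').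
Proof.
  rewrite (last_splice _ _ _ _ _ _ ((0,0) : pt)), (si_last I), hd_splice.
  unfold detour_shift. apply shift_rows_sigma_pow.
Qed.

Lemma step_length :
  length (removelast V') = (length (removelast V) + Z.to_nat (laps n * n))%nat.
Proof.
  rewrite removelast_splice, removelast_app_cons, !length_app. cbn [length].
  rewrite length_app, length_map, length_detour. lia.
Qed.

Lemma step_relocate_pending :
  exists P', Forall2 (relocated (detour_shift n a) V') P P'.
Proof.
  apply relocate_bridges; [reflexivity|]. intros b Hb.
  split; [apply (si_pending I b (in_cons _ _ _ Hb))|].
  intros E. injection E as E _. pose proof (si_pending_reps I) as K.
  inversion K as [|? ? K1 _]; subst. apply K1, in_map_iff. exists b. now rewrite E.
Qed.

Lemma step_relocate_done :
  exists O', Forall2 (relocated (detour_shift n a) V') O O'.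
Proof.
  apply relocate_bridges; [reflexivity|]. intros o Ho.
  destruct (si_done I o Ho) as [Hc [_ [Hb _]]]. split; [exact Hc|].
  intros E. injection E as E _. rewrite E in Hb.
  exact (in_band_core M _ HM Hb (bridge_src_core M n a HM step_bridge_ok)).
Qed.

Lemma detour_shift_mult : detour_shift n a = (- br_dir a * laps n) * (2 * n).
Proof. reflexivity. Qed.

Lemma step_pending P' : Forall2 (relocated (detour_shift n a) V') P P' ->
  forall b', In b' P' ->
  consecutive (br_src b') (br_dst b') V' /\ bridge_ok M n b' /\ ~ In (br_class b') (br_class a :: S).
Proof.
  intros HP' b' Hb'. destruct (Forall2_in_r HP' Hb') as [b [Hb [Eb Hc]]].
  destruct (si_pending I b (in_cons _ _ _ Hb)) as [_ [Hok HS]].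
  assert (Hcls : br_class b' = br_class b) by (destruct Eb as [-> | ->]; reflexivity).
  split; [exact Hc | split].
  - destruct Eb as [-> | ->]; [exact Hok|]. rewrite detour_shift_mult. now apply bridge_ok_shift_rows.
  - rewrite Hcls. intros [E | E]; [|exact (HS E)].
    pose proof (si_pending_classes I) as HPcls. inversion HPcls as [|? ? HaP _].
    apply HaP. rewrite E. now apply in_map.
Qed.

Lemma step_done O' : Forall2 (relocated (detour_shift n a) V') O O' ->
  forall o, In o (next_bridge M n a :: O') ->
  consecutive (br_src o) (br_dst o) V' /\ bridge_ok (M + 4) n (bridge_map iota o) /\
  in_band M (br_src o) /\ In (band_class M n (br_src o)) (br_class a :: S) /\
  br_class o = (band_class M n (br_src o) + 1) mod num_classes n.
Proof.
  pose proof step_bridge_ok as Ha.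
  intros HO' o [<- | Ho].
  - destruct (detour_head M n a Hn) as [D HD].
    destruct (detour_pt_band M n a HM 0) as [Hb _].
    cbn [next_bridge br_src br_dst br_class]. rewrite band_class_detour_pt by auto.
    split; [|split; [|split; [|split]]]; auto using bridge_ok_next, in_eq.
    exists (A ++ [br_src a]), (D ++ map T (br_dst a :: B)).
    unfold splice. now rewrite HD, <- app_assoc.
  - destruct (Forall2_in_r HO' Ho) as [o0 [Ho0 [Eo Hc]]].
    destruct (si_done I o0 Ho0) as [_ [Hok [Hb [HS Hcls]]]].
    split; [exact Hc|]. destruct Eo as [-> | ->].
    + split; [|split; [|split]]; auto using in_cons.
    + rewrite detour_shift_mult. cbn [bridge_map br_src br_class].
      rewrite band_class_shift_rows. split; [|split; [|split]]; auto using in_cons.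
      change (bridge_map iota (bridge_map (shift_rows (- br_dir a * laps n * (2 * n))) o0))
        with (bridge_map (shift_rows (- br_dir a * laps n * (2 * n))) (bridge_map iota o0)).
      now apply bridge_ok_shift_rows.
Qed.

Lemma splice_inv_step : exists V'' t' P' O',
  splice_inv M n t0 V'' t' P' O' (br_class a :: S) /\ length P' = length P.
Proof.
  pose proof step_bridge_ok as Ha.
  destruct step_relocate_pending as [P' HP']. destruct step_relocate_done as [O' HO'].
  exists V', (t + 2 * (- br_dir a * laps n)), P', (next_bridge M n a :: O').
  split; [|exact (eq_sym (Forall2_length HP'))].
  assert (EPcls : map br_class P' = map br_class P)
    by exact (relocated_map _ _ br_class _ _ (fun _ => eq_refl) HP').
  assert (EPdir : map br_dir P' = map br_dir P)
    by exact (relocated_map _ _ br_dir _ _ (fun _ => eq_refl) HP').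
  assert (EOdir : map br_dir O' = map br_dir O)
    by exact (relocated_map _ _ br_dir _ _ (fun _ => eq_refl) HO').
  assert (EPrep : map (fun b => orbit_rep M n (br_src b)) P'
                  = map (fun b => orbit_rep M n (br_src b)) P).
  { refine (relocated_map _ _ _ _ _ _ HP'). intros b. cbn [bridge_map br_src].
    rewrite detour_shift_mult. apply orbit_rep_shift_rows. lia. }
  assert (EOcls : map (fun o => band_class M n (br_src o)) O'
                  = map (fun o => band_class M n (br_src o)) O).
  { refine (relocated_map _ _ _ _ _ _ HO'). intros b. cbn [bridge_map br_src].
    rewrite detour_shift_mult. apply band_class_shift_rows. }
  pose proof (si_pending_classes I) as HPcls. pose proof (si_pending_reps I) as HPrep.
  constructor.
  - unfold splice. now destruct A.
  - exact step_chain.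
  - exact step_points.
  - exact step_reps.
  - exact step_last.
  - rewrite step_length, (si_length I). cbn [length]. rewrite (Forall2_length HO'). lia.
  - exact (step_pending P' HP').
  - rewrite EPcls. now inversion HPcls.
  - rewrite EPrep. now inversion HPrep.
  - exact (step_done O' HO').
  - cbn [map next_bridge br_src]. rewrite EOcls, band_class_detour_pt by auto.
    constructor; [|exact (si_done_classes I)].
    intros Hin. apply in_map_iff in Hin as [o [Eo Ho]].
    apply step_class_new. rewrite <- Eo. apply (si_done I o Ho).
  - rewrite (si_winding I). unfold zsum. cbn [map fold_right next_bridge br_dir].
    fold (zsum (map br_dir O')). rewrite EOdir. unfold zsum. ring.
  - pose proof (si_dir_sum I) as Hs. unfold zsum in *.
    cbn [map fold_right next_bridge br_dir] in *. rewrite EOdir, EPdir. lia.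
  - pose proof (si_count I) as Hc. cbn [length] in *.
    rewrite <- (Forall2_length HP'), <- (Forall2_length HO'). lia.
Qed.

End Splice_step.

(* [V] has a bridge for each class; the directions summing to [0] make the translations of
   the walk cancel. *)
Definition extensible (M n : Z) (V : list pt) :=
  exists P, (forall b, In b P -> consecutive (br_src b) (br_dst b) V /\ bridge_ok M n b) /\
    NoDup (map br_class P) /\ NoDup (map (fun b => orbit_rep M n (br_src b)) P) /\
    zsum (map br_dir P) = 0 /\ length P = Z.to_nat (num_classes n).

Lemma NoDup_map_determined {A B C} (f : A -> B) (g : A -> C) l :
  NoDup (map f l) -> (forall a b, In a l -> In b l -> g a = g b -> f a = f b) -> NoDup (map g l).
Proof.
  induction l as [|a l IH]; simpl; intros Hf Hg; constructor.
  - inversion Hf as [|? ? Hfa _]. intros Hin. apply in_map_iff in Hin as [b [Eb Hb]].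
    apply Hfa. rewrite (Hg a b); auto. now apply in_map.
  - inversion Hf. apply IH; auto.
Qed.

Lemma splice_inv_init K n t0 L : 3 <= K -> 1 <= n ->
  closed_tour K n t0 L -> extensible (K + 4) n (map iota L) ->
  exists P, splice_inv (K + 4) n t0 (map iota L) t0 P [] [].
Proof.
  intros HK Hn [Hne [Hch [Hs [Hk [Hl Hlen]]]]] [P [HP [HPs [HPk [HPsum HPlen]]]]].
  exists P. constructor.
  - now destruct L.
  - apply (chain_map knight_adj); auto. apply knight_adj_iota.
  - intros p Hp. apply in_map_iff in Hp as [q [<- Hq]]. specialize (Hs q Hq).
    unfold in_strip, in_core, iota in *. simpl. lia.
  - rewrite removelast_map, map_map, (map_ext _ (fun p => iota (orbit_rep K n p)))
      by (intros; apply orbit_rep_iota).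
    rewrite <- map_map. apply NoDup_map_NoDup_ForallPairs; auto. intros ? ? _ _. apply iota_inj.
  - rewrite (last_map iota L (0,0)), Hl, <- sigma_pow_iota by auto. now destruct L.
  - rewrite removelast_map, length_map, Hlen. simpl. f_equal. lia.
  - intros b Hb. destruct (HP b Hb). auto.
  - exact HPs.
  - exact HPk.
  - intros _ [].
  - constructor.
  - simpl. ring.
  - exact HPsum.
  - simpl. lia.
Qed.

Lemma splice_inv_finish M n t0 : 7 <= M -> 1 <= n -> forall P V t O S,
  splice_inv M n t0 V t P O S -> exists V' t' O' S', splice_inv M n t0 V' t' [] O' S'.
Proof.
  intros HM Hn P. remember (length P) as k eqn:Hk. revert P Hk.
  induction k as [|k IH]; intros [|a P] Hk V t O S I; try discriminate.
  - now exists V, t, O, S.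
  - destruct (proj1 (si_pending I a (in_eq _ _))) as [A [B ->]].
    destruct (splice_inv_step _ _ _ _ _ _ _ _ _ _ HM Hn I) as [V' [t' [P' [O' [I' HP']]]]].
    refine (IH P' _ _ _ _ _ I'). simpl in Hk. lia.
Qed.

Lemma closed_tour_of_splice_inv M n t0 V t O S : 7 <= M -> 1 <= n ->
  splice_inv M n t0 V t [] O S -> closed_tour M n t0 V.
Proof.
  intros HM Hn I. pose proof (si_dir_sum I) as Hsum. pose proof (si_winding I) as Ht.
  pose proof (si_count I) as Hc. simpl in Hsum, Hc.
  rewrite <- Hsum in Ht. replace t0 with t by lia.
  split; [exact (si_nonempty I)|]. split; [exact (si_chain I)|].
  split; [intros p Hp; exact (proj1 (si_points I p Hp))|].
  split; [exact (si_reps I)|]. split; [exact (si_last I)|].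
  rewrite (si_length I), Hc.
  destruct (parity_cases n) as [[_ [-> [-> _]]] | [_ [-> [-> _]]]]; nia.
Qed.

Lemma extensible_of_splice_inv M n t0 V t O S : 7 <= M -> 1 <= n ->
  splice_inv M n t0 V t [] O S -> extensible (M + 4) n (map iota V).
Proof.
  intros HM Hn I. pose proof (si_dir_sum I) as Hsum. pose proof (si_count I) as Hc.
  simpl in Hsum, Hc.
  assert (Hclass : forall o, In o O -> 0 <= band_class M n (br_src o) < num_classes n).
  { intros. unfold band_class. apply Z.mod_pos_bound. destruct (parity_cases n) as [[_ [-> _]] | [_ [-> _]]]; lia. }
  exists (map (bridge_map iota) O). split; [|split; [|split; [|split]]].
  - intros b Hb. apply in_map_iff in Hb as [o [<- Ho]].
    destruct (si_done I o Ho) as [Hco [Hok _]].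
    split; [cbn [bridge_map br_src br_dst]; now apply consecutive_map | exact Hok].
  - rewrite map_map. apply (NoDup_map_determined _ _ _ (si_done_classes I)).
    intros o1 o2 H1 H2 E. cbn [bridge_map br_class] in E.
    rewrite (proj2 (proj2 (proj2 (proj2 (si_done I o1 H1))))) in E.
    rewrite (proj2 (proj2 (proj2 (proj2 (si_done I o2 H2))))) in E.
    pose proof (Hclass o1 H1). pose proof (Hclass o2 H2).
    destruct (parity_cases n) as [[_ [Hq _]] | [_ [Hq _]]]; rewrite Hq in *; lia_mod.
  - rewrite map_map. apply (NoDup_map_determined _ _ _ (si_done_classes I)).
    intros o1 o2 H1 H2 E. cbn [bridge_map br_src] in E.
    rewrite !orbit_rep_iota in E. apply iota_inj in E.
    destruct (si_done I o1 H1) as [_ [_ [Hb1 _]]].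
    symmetry. now apply band_class_orbit_rep_eq.
  - rewrite map_map. symmetry. exact Hsum.
  - now rewrite length_map.
Qed.

Lemma widen_closed_tour K n t0 L : 3 <= K -> 1 <= n ->
  closed_tour K n t0 L -> extensible (K + 4) n (map iota L) ->
  exists L', closed_tour (K + 4) n t0 L' /\ extensible (K + 8) n (map iota L').
Proof.
  intros HK Hn HL HE.
  destruct (splice_inv_init K n t0 L HK Hn HL HE) as [P I].
  destruct (splice_inv_finish (K + 4) n t0 ltac:(lia) Hn _ _ _ _ _ I) as [V [t [O [S I']]]].
  exists V. split.
  - exact (closed_tour_of_splice_inv (K + 4) n t0 V t O S ltac:(lia) Hn I').
  - replace (K + 8) with (K + 4 + 4) by lia. exact (extensible_of_splice_inv (K + 4) n t0 V t O S ltac:(lia) Hn I').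
Qed.

Lemma widen_closed_tour_iter m n t0 L : 7 <= m -> 1 <= n ->
  closed_tour (m - 4) n t0 L -> extensible m n (map iota L) -> forall j : nat,
  exists L', closed_tour (m - 4 + 4 * Z.of_nat j) n t0 L' /\
             extensible (m + 4 * Z.of_nat j) n (map iota L').
Proof.
  intros Hm Hn HL HE j. induction j as [|j [L1 [H1 E1]]].
  - exists L. simpl. now rewrite !Z.add_0_r.
  - replace (m + 4 * Z.of_nat j) with (m - 4 + 4 * Z.of_nat j + 4) in E1 by lia.
    destruct (widen_closed_tour (m - 4 + 4 * Z.of_nat j) n t0 L1 ltac:(lia) Hn H1 E1) as [L2 [H2 E2]].
    exists L2. rewrite Nat2Z.inj_succ.
    replace (m - 4 + 4 * Z.succ (Z.of_nat j)) with (m - 4 + 4 * Z.of_nat j + 4) by lia.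
    replace (m + 4 * Z.succ (Z.of_nat j)) with (m - 4 + 4 * Z.of_nat j + 8) by lia.
    now split.
Qed.

Lemma tour_lift_widen m n t0 N w k : 7 <= m -> 1 <= n -> 0 <= k ->
  tour_lift (m - 4) n N w -> w N = sigma_pow (m - 4) n t0 (0,0) ->
  extensible m n (map iota (map w (seq 0 (S N)))) ->
  exists N' w', tour_lift (m + 4 * k) n N' w' /\ w' N' = sigma_pow (m + 4 * k) n t0 (0,0).
Proof.
  intros Hm Hn Hk HT HN HE.
  pose proof (closed_tour_of_tour_lift (m - 4) n N w t0 ltac:(lia) ltac:(lia) HT HN) as HL.
  destruct (widen_closed_tour_iter m n t0 _ Hm Hn HL HE (Z.to_nat (k + 1))) as [L [HL' _]].
  replace (m - 4 + 4 * Z.of_nat (Z.to_nat (k + 1))) with (m + 4 * k) in HL' by lia.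
  destruct (closed_tour_based (m + 4 * k) n t0 L ltac:(lia) ltac:(lia) HL') as [L' [HL'' H0]].
  destruct (tour_lift_of_closed_tour (m + 4 * k) n t0 L' ltac:(lia) ltac:(lia) HL'' H0) as [T1 T2].
  eauto.
Qed.

(** * Bridges from an extending collection *)

Definition edge_eq_dec (e e' : edge) : {e = e'} + {e <> e'}.
Proof. repeat decide equality; apply Z.eq_dec. Defined.

Definition on_edge (p q : pt) (e : edge) := (p = fst e /\ q = snd e) \/ (p = snd e /\ q = fst e).

Definition edge_right (e : edge) : bool := negb (fst (fst e) =? 2).

(* the parity that the class of a detour inserted at [e] must have *)
Definition edge_parity (n : Z) (e : edge) := snd (fst e) + 1 - (if edge_right e then n else 0).

Section Extending_edges.
Variables (m n : Z) (N : nat) (w : nat -> pt) (E U D : list edge).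
Hypotheses (Hm : 7 <= m) (Hn : 1 <= n) (HT : tour_lift (m - 4) n N w)
  (HE : NoDup E) (HLR : forall e, In e E -> left_edge m e \/ right_edge m e)
  (HUD : Permutation E (U ++ D)) (Hlen : length U = length D)
  (HU : forall e, In e U -> traverses_up (fun i => iota (w i)) N e)
  (HD : forall e, In e D -> traverses_down (fun i => iota (w i)) N e).

Local Notation W i := (iota (w i)).
Local Notation V := (map iota (map w (seq 0 (S N)))).

Definition edge_dir (e : edge) := if in_dec edge_eq_dec e U then 1 else -1.

Definition bridge_for (e : edge) (b : bridge) :=
  consecutive (br_src b) (br_dst b) V /\ bridge_ok m n b /\ br_dir b = edge_dir e /\
  exists i, (i < N)%nat /\ br_src b = W i /\ on_edge (W i) (W (S i)) e.

Lemma edge_traversal e : In e E ->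
  exists i, (i < N)%nat /\ on_edge (W i) (W (S i)) e /\ snd (W (S i)) = snd (W i) + 2 * edge_dir e.
Proof.
  intros He. assert (Hrow : Z.abs (snd (fst e) - snd (snd e)) = 2)
    by (destruct (HLR e He) as [(_ & _ & H) | (_ & _ & H)]; exact H).
  unfold edge_dir. destruct (in_dec edge_eq_dec e U) as [Hu | Hu].
  - destruct (HU e Hu) as [i [Hi [Ho Hlt]]]. exists i. repeat split; auto.
    destruct Ho as [[E1 E2] | [E1 E2]]; rewrite E1, E2 in *; lia.
  - assert (Hd : In e D).
    { apply (Permutation_in _ HUD), in_app_or in He. tauto. }
    destruct (HD e Hd) as [i [Hi [Ho Hlt]]]. exists i. repeat split; auto.
    destruct Ho as [[E1 E2] | [E1 E2]]; rewrite E1, E2 in *; lia.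
Qed.

Lemma bridge_for_edge e c : In e E ->
  0 <= c < num_classes n -> (c - edge_parity n e) mod 2 = 0 ->
  exists b, bridge_for e b /\ br_class b = c.
Proof.
  intros He Hc Hpar. destruct (edge_traversal e He) as [i [Hi [Ho Hd]]].
  exists (Bridge (W i) (W (S i)) (edge_dir e) c (edge_right e)).
  split; [|reflexivity]. split; [|split; [|split; [reflexivity | eauto]]].
  - rewrite map_map. exact (consecutive_map_seq (fun i => iota (w i)) N i Hi).
  - assert (Hdir : edge_dir e = 1 \/ edge_dir e = -1)
      by (unfold edge_dir; destruct (in_dec edge_eq_dec e U); auto).
    unfold bridge_ok, br_col, br_parity, edge_parity, edge_right, reflect_col in *.
    cbn [br_src br_dst br_dir br_class br_right] in *.
    destruct e as [[e1 e2] [e3 e4]]. cbn [fst snd] in *.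
    destruct (HLR _ He) as [(H1 & H2 & H3) | (H1 & H2 & H3)]; cbn [fst snd] in H1, H2, H3;
      case_if; try lia;
      destruct Ho as [[E1 E2] | [E1 E2]]; rewrite E1, E2 in *; cbn [fst snd] in *;
      (split; [exact Hdir|]); (split; [exact Hd|]); repeat split; lia_mod.
Qed.

Lemma bridges_for_edges Es cs : incl Es E ->
  Forall2 (fun e c => 0 <= c < num_classes n /\ (c - edge_parity n e) mod 2 = 0) Es cs ->
  exists Bs, Forall2 bridge_for Es Bs /\ map br_class Bs = cs.
Proof.
  intros Hincl Hcs. induction Hcs as [|e c Es cs [Hc Hpar] _ IH]; [now exists []|].
  destruct IH as [Bs [HBs Hcls]]; [intros x Hx; apply Hincl; now right|].
  destruct (bridge_for_edge e c (Hincl e (in_eq _ _)) Hc Hpar) as [b [Hb Hbc]].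
  exists (b :: Bs). split; [now constructor | simpl; congruence].
Qed.

Lemma on_edge_unique p q e e' :
  (left_edge m e \/ right_edge m e) -> (left_edge m e' \/ right_edge m e') ->
  on_edge p q e -> on_edge p q e' -> e = e'.
Proof.
  intros He He' Ho Ho'.
  assert (Hcol : forall e, left_edge m e \/ right_edge m e -> fst (fst e) + 1 = fst (snd e))
    by (unfold left_edge, right_edge; intros; lia).
  apply Hcol in He, He'. destruct e as [f g], e' as [f' g']. unfold on_edge in *. cbn [fst snd] in *.
  destruct Ho as [[-> ->] | [-> ->]], Ho' as [[-> ->] | [E1 E2]]; subst; auto; lia.
Qed.

Lemma bridge_reps_distinct e e' b b' : In e E -> In e' E -> e <> e' ->
  bridge_for e b -> bridge_for e' b' ->
  orbit_rep m n (br_src b) <> orbit_rep m n (br_src b').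
Proof.
  intros He He' Hne (_ & _ & _ & i & Hi & -> & Ho) (_ & _ & _ & i' & Hi' & -> & Ho') Erep.
  rewrite <- (Z.sub_add 4 m), !orbit_rep_iota in Erep. apply iota_inj in Erep.
  destruct HT as (_ & _ & _ & _ & Hinj & _).
  assert (i = i') as <- by (apply Hinj; auto; apply same_orbit_orbit_rep; auto; lia).
  exact (Hne (on_edge_unique _ _ e e' (HLR e He) (HLR e' He') Ho Ho')).
Qed.

Lemma NoDup_bridge_reps Es Bs : incl Es E -> NoDup Es -> Forall2 bridge_for Es Bs ->
  NoDup (map (fun b => orbit_rep m n (br_src b)) Bs).
Proof.
  intros Hincl HEs HBs. induction HBs as [|e b Es Bs Hb HBs IH]; simpl; constructor.
  - intros Hin. apply in_map_iff in Hin as [b' [Eb Hb']].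
    destruct (Forall2_in_r HBs Hb') as [e' [He' Hb'']].
    inversion HEs as [|? ? HeEs _].
    refine (bridge_reps_distinct e' e b' b _ _ _ Hb'' Hb Eb).
    + apply Hincl. now right.
    + apply Hincl, in_eq.
    + intros ->. contradiction.
  - apply IH; [intros x Hx; apply Hincl; now right | now inversion HEs].
Qed.

Lemma zsum_edge_dir Es : Permutation E Es -> zsum (map edge_dir Es) = 0.
Proof.
  intros HEs.
  assert (Hperm : forall l l', Permutation l l' -> zsum l = zsum l')
    by (unfold zsum; induction 1; simpl; lia).
  assert (Hconst : forall c l, (forall e, In e l -> edge_dir e = c) ->
                     zsum (map edge_dir l) = c * Z.of_nat (length l)).
  { intros c. unfold zsum. induction l as [|e l IH]; intros Hl; simpl; [lia|].
    rewrite (Hl e (in_eq _ _)), IH by (intros; apply Hl; now right). lia. }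
  assert (Happ : forall l l', zsum (l ++ l') = zsum l + zsum l')
    by (intros l l'; unfold zsum; induction l; simpl; lia).
  pose proof (Permutation_NoDup HUD HE) as HND.
  rewrite <- (Hperm _ _ (Permutation_map edge_dir HEs)), (Hperm _ _ (Permutation_map edge_dir HUD)).
  rewrite map_app, Happ, (Hconst 1 U), (Hconst (-1) D), Hlen; [lia | |].
  - intros e He. unfold edge_dir. destruct (in_dec edge_eq_dec e U) as [Hu | _]; auto.
    apply in_split in He as [D1 [D2 ->]]. rewrite app_assoc in HND.
    apply NoDup_remove_2 in HND. exfalso. apply HND. rewrite !in_app_iff. auto.
  - intros e He. unfold edge_dir. now destruct (in_dec edge_eq_dec e U).
Qed.

Lemma extensible_of_edge_classes Es cs : Permutation E Es -> NoDup cs ->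
  length cs = Z.to_nat (num_classes n) ->
  Forall2 (fun e c => 0 <= c < num_classes n /\ (c - edge_parity n e) mod 2 = 0) Es cs ->
  extensible m n V.
Proof.
  intros HEs Hcs Hlen' Hfit.
  assert (Hincl : incl Es E) by (intros e He; now apply (Permutation_in _ (Permutation_sym HEs))).
  destruct (bridges_for_edges Es cs Hincl Hfit) as [Bs [HBs Hcls]].
  assert (Hdirs : map br_dir Bs = map edge_dir Es).
  { clear -HBs. induction HBs as [|e b ? ? (_ & _ & Hd & _) _ IH]; simpl; congruence. }
  exists Bs. split; [|split; [|split; [|split]]].
  - intros b Hb. destruct (Forall2_in_r HBs Hb) as [e [_ (Hc & Hok & _)]]. auto.
  - now rewrite Hcls.
  - exact (NoDup_bridge_reps Es Bs Hincl (Permutation_NoDup HEs HE) HBs).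
  - rewrite Hdirs. exact (zsum_edge_dir Es HEs).
  - now rewrite <- Hlen', <- Hcls, length_map.
Qed.

End Extending_edges.

Lemma edge_parity_left m n e k : left_edge m e -> snd (fst e) = k -> edge_parity n e = k + 1.
Proof. unfold left_edge, edge_parity, edge_right. intros [-> _] <-. simpl. lia. Qed.

Lemma edge_parity_right m n e k : 7 <= m -> right_edge m e -> snd (fst e) = k ->
  edge_parity n e = k + 1 - n.
Proof.
  unfold right_edge, edge_parity, edge_right. intros Hm [-> _] <-.
  replace (m - 4 =? 2) with false by lia. reflexivity.
Qed.

Lemma extensible_of_extendable m n N w : 7 <= m -> 1 <= n -> extendable m n N w ->
  extensible m n (map iota (map w (seq 0 (S N)))).
Proof.
  intros Hm Hn [HT [E [[HE [HLR Hcases]] [U [D [HUD [Hlen [HU HD]]]]]]]].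
  pose proof (extensible_of_edge_classes m n N w E U D Hm Hn HT HE HLR HUD Hlen HU HD) as Hext.
  assert (Hpar : forall e, In e E -> forall k, snd (fst e) = k ->
            edge_parity n e = k + 1 \/ edge_parity n e = k + 1 - n).
  { intros e He k Hk. destruct (HLR e He) as [Hl | Hr].
    - left. exact (edge_parity_left m n e k Hl Hk).
    - right. exact (edge_parity_right m n e k Hm Hr Hk). }
  destruct Hcases as [[Heven (e1 & e2 & e3 & e4 & HEs & [k1 H1] & [k2 H2] & [k3 H3] & [k4 H4])]
                     | [Hodd (e1 & e2 & HEs & H1 & H2)]].
  - destruct Heven as [h ->].
    destruct (parity_cases (2 * h)) as [[_ [Hq _]] | [_ [_ [_ [h' Hh']]]]]; [|lia].
    assert (Hin : forall e, In e [e1; e2; e3; e4] -> In e E)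
      by (intros; now apply (Permutation_in _ (Permutation_sym HEs))).
    (* even edges need odd classes and odd edges even ones *)
    apply (Hext [e1; e2; e3; e4] [1; 3; 0; 2]); auto.
    + repeat constructor; simpl; lia.
    + now rewrite Hq.
    + rewrite Hq. repeat constructor; try lia;
        match goal with |- (?c - edge_parity _ ?e) mod 2 = 0 =>
          destruct (Hpar e ltac:(apply Hin; simpl; tauto) _ eq_refl) as [-> | ->]; lia_mod end.
  - destruct Hodd as [h ->].
    destruct (parity_cases (2 * h + 1)) as [[_ [_ [_ [h' Hh']]]] | [_ [Hq _]]]; [lia|].
    assert (Hin : forall e, In e [e1; e2] -> In e E)
      by (intros; now apply (Permutation_in _ (Permutation_sym HEs))).
    apply (Hext [e1; e2] [1; 0]); auto.
    + repeat constructor; simpl; lia.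
    + now rewrite Hq.
    + rewrite Hq. repeat constructor; try lia.
      * destruct H1 as [[Hl [k Hk]] | [Hr [k Hk]]];
          [rewrite (edge_parity_left m _ e1 _ Hl Hk) | rewrite (edge_parity_right m _ e1 _ Hm Hr Hk)];
          lia_mod.
      * destruct H2 as [[Hl [k Hk]] | [Hr [k Hk]]];
          [rewrite (edge_parity_left m _ e2 _ Hl Hk) | rewrite (edge_parity_right m _ e2 _ Hm Hr Hk)];
          lia_mod.
Qed.

Theorem corollary3p12 (m n : Z) (N : nat) (w : nat -> pt) :
  7 <= m -> 1 <= n -> extendable m n N w ->
  (nullhomotopic N w ->
     forall k : Z, 0 <= k ->
       exists (N' : nat) (w' : nat -> pt),
         tour_lift (m + 4 * k) n N' w' /\ nullhomotopic N' w') /\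
  (generating (m - 4) n N w ->
     forall k : Z, 0 <= k ->
       exists (N' : nat) (w' : nat -> pt),
         tour_lift (m + 4 * k) n N' w' /\ generating (m + 4 * k) n N' w').
Proof.
  intros Hm Hn Hext.
  pose proof (extensible_of_extendable m n N w Hm Hn Hext) as HE.
  destruct Hext as [HT _].
  assert (Hend : forall K t, sigma_pow K n t (0,0) = (if Z.even t then 0 else K - 1, t * n))
    by (intros; unfold sigma_pow; cbn [fst snd]; destruct (Z.even t); f_equal; lia).
  split.
  - intros HN k Hk. unfold nullhomotopic in HN. rewrite <- (sigma_pow_0 (m - 4) n) in HN.
    destruct (tour_lift_widen m n 0 N w k Hm Hn Hk HT HN HE) as (N' & w' & HT' & HN').
    exists N', w'. split; [exact HT'|]. unfold nullhomotopic. now rewrite HN', sigma_pow_0.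
  - intros [HG | HG] k Hk.
    + assert (H1 : w N = sigma_pow (m - 4) n 1 (0,0)) by (rewrite HG, Hend; f_equal; lia).
      destruct (tour_lift_widen m n 1 N w k Hm Hn Hk HT H1 HE) as (N' & w' & HT' & HN').
      exists N', w'. split; [exact HT'|]. left. rewrite HN', Hend. f_equal; lia.
    + assert (H1 : w N = sigma_pow (m - 4) n (-1) (0,0)) by (rewrite HG, Hend; f_equal; lia).
      destruct (tour_lift_widen m n (-1) N w k Hm Hn Hk HT H1 HE) as (N' & w' & HT' & HN').
      exists N', w'. split; [exact HT'|]. right. rewrite HN', Hend. f_equal; lia.
Qed.
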